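(* For every integer $n\ge2$ and every $m\in\{1,2,\dots,n-1\}$, the coefficient of $u^{m}v^{n+1-m}w^{n-1}$ in $P_{n/(n+1)}(u,v,w)$ (i.e. the coefficient at the lattice point $(m,n+1-m)$ of the Newton polygon) equals $4m$.
   Context: Markov polynomials. Let $x,y,z$ be indeterminates. Consider the set consisting of all rationals $\rho\in[0,1]$, each written in lowest terms $\rho=a/b$ with integers $a\ge 0$, $b\ge 1$, together with the formal symbol $1/0$. Define Laurent polynomials $M_\rho(x,y,z)$ recursively by $M_{1/0}=y$, $M_{0/1}=x$, $M_{1/1}=\frac{x^2+y^2}{z}$, and: whenever $a/b$, $c/d$ are in this set with $|ad-bc|=1$ and $(a+2c)/(b+2d)\in[0,1]$, then $M_{\frac{a+2c}{b+2d}}=\big(M_{c/d}^2+M_{\frac{a+c}{b+d}}^2\big)/M_{a/b}$. This determines $M_\rho$ for every rational $\rho\in[0,1]$. Numerator. For coprime $1\le a\le b$, $P_{a/b}(u,v,w)$ denotes the homogeneous polynomial of degree $a+b-1$ such that $M_{a/b}(x,y,z)=P_{a/b}(x^2,y^2,z^2)/(x^{a-1}y^{b-1}z^{a+b-1})$; its existence is known. *)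

From HB Require Import structures.
From mathcomp Require Import all_boot all_order all_algebra.
From mathcomp Require Import fraction.
From mathcomp Require Import mpoly.
Set Implicit Arguments. Unset Strict Implicit. Unset Printing Implicit Defensive.
Import Order.TTheory GRing.Theory Num.Theory.
Local Open Scope ring_scope.

(* Polynomial ring Q[u,v,w] (also used as Q[x,y,z]); variables indexed 0,1,2. *)
Notation Pol := {mpoly rat[3]}.
(* Field of rational functions Q(x,y,z); it contains the Laurent polynomials. *)
Notation K := {fraction Pol}.

Definition toK (p : Pol) : K := @FracField.tofrac _ p.
Definition var (i : 'I_3) : K := toK 'X_i.
Definition Xv : K := var 0.
Definition Yv : K := var 1.
Definition Zv : K := var 2.

(* Index set: a rational a/b in [0,1] in lowest terms, encoded as the pair
   (a,b) with coprime a b and a <= b, or the formal symbol 1/0 = pair (1,0). *)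
Definition farey_ok (a b : nat) : bool :=
  ((a == 1%N) && (b == 0%N)) || (coprime a b && (a <= b)%N).

Definition farey_adj (a b c d : nat) : bool :=
  (a * d == b * c + 1)%N || (b * c == a * d + 1)%N.

Definition markov_spec (M : nat -> nat -> K) : Prop :=
  [/\ M 1%N 0%N = Yv, M 0%N 1%N = Xv, M 1%N 1%N = (Xv ^+ 2 + Yv ^+ 2) / Zv &
   forall a b c d : nat, farey_ok a b -> farey_ok c d -> farey_adj a b c d ->
     (a + 2 * c <= b + 2 * d)%N ->
     M (a + 2 * c)%N (b + 2 * d)%N
       = (M c d ^+ 2 + M (a + c)%N (b + d)%N ^+ 2) / M a b].

Definition sq_subst (P : Pol) : Pol :=
  P \mPo [tuple 'X_0 ^+ 2; 'X_1 ^+ 2; 'X_2 ^+ 2].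

Definition is_numerator (M : nat -> nat -> K) (a b : nat) (P : Pol) : Prop :=
  P \is (a + b - 1)%N.-homog /\
  M a b = toK (sq_subst P) / (Xv ^+ (a - 1) * Yv ^+ (b - 1) * Zv ^+ (a + b - 1)).

From HB Require Import structures.
From mathcomp Require Import all_boot all_order all_algebra.
From mathcomp Require Import fraction.
From mathcomp Require Import mpoly.
From mathcomp Require Import ring zify.
Set Implicit Arguments. Unset Strict Implicit. Unset Printing Implicit Defensive.
Import Order.TTheory GRing.Theory Num.Theory.
Local Open Scope ring_scope.

(* The Farey neighbours n/(n+1) and 1/1 give the exchange relation
   M_{(n+2)/(n+3)} = (M_{1/1}^2 + M_{(n+1)/(n+2)}^2) / M_{n/(n+1)}.
   Write M_{n/(n+1)} = q_n(x^2,y^2,z^2) x / (x y z^2)^n.  The linear recurrence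
   q_{n+2} = (u+v)(u+v+w) q_{n+1} - u v w^2 q_n
   has the Cassini invariant q_{n+2} q_n - q_{n+1}^2 = (u+v)^2 v w (u v w^2)^n,
   and this invariant is exactly what turns the exchange relation into the linear
   recurrence; hence P_{n/(n+1)} = q_n.  Following the linear recurrence, q_n has
   degree n in w with leading coefficient u^n, and its coefficient of w^(n-1) is
   v^(n+1) + sum_{0<a<n} 4a u^a v^(n+1-a) + (3n-1) u^n v + n u^(n+1). *)

Lemma nat_ind2 (P : nat -> Prop) :
  P 0%N -> P 1%N -> (forall n, P n -> P n.+1 -> P n.+2) -> forall n, P n.
Proof.
move=> P0 P1 PS n; suff [] : P n /\ P n.+1 by [].
by elim: n => [|n [? ?]]; split=> //; apply: PS.
Qed.

Lemma mcoeffMX_if (n : nat) (R : nzRingType) (p : {mpoly R[n]}) m e :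
  (p * 'X_[m])@_e = if (m <= e)%MM then p@_(e - m) else 0.
Proof.
case: ifP => [le_me | not_le_me]; first by rewrite -{1}(submK le_me) addmC mcoeffMX.
apply/eqP; rewrite mcoeff_eq0 (perm_mem (msuppMX _ _)).
by apply/mapP => -[m' _ em]; rewrite em lem_addr in not_le_me.
Qed.

Definition mnm3 (a b c : nat) : 'X_{1..3} := [multinom [tuple a; b; c]].

Lemma mnm3E a b c (i : 'I_3) : mnm3 a b c i = nth 0%N [:: a; b; c] i.
Proof. exact: mnm_nth. Qed.

Lemma mnm3_eta (m : 'X_{1..3}) : m = mnm3 (m ord0) (m (inord 1)) (m (inord 2)).
Proof.
by apply/mnmP => -[[|[|[|i]]] lt_i3] //; rewrite mnm3E /=; congr (m _); apply: val_inj;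
  rewrite /= ?inordK.
Qed.

Lemma eq_mnm3 a b c a' b' c' :
  (mnm3 a b c == mnm3 a' b' c') = [&& a == a', b == b' & c == c'].
Proof. by rewrite -val_eqE /= -val_eqE /= !eqseq_cons andbT. Qed.

Lemma lem_mnm3 a b c a' b' c' :
  (mnm3 a b c <= mnm3 a' b' c')%MM = [&& (a <= a')%N, (b <= b')%N & (c <= c')%N].
Proof.
apply/mnm_lepP/and3P => [le_m | [le_a le_b le_c] [[|[|[|i]]] lt_i3]]; rewrite ?mnm3E //.
by split; [exact: (le_m ord0) | have := le_m (inord 1) | have := le_m (inord 2)];
  rewrite !mnm3E inordK.
Qed.

Lemma subm_mnm3 a b c a' b' c' :
  (mnm3 a' b' c' - mnm3 a b c)%MM = mnm3 (a' - a) (b' - b) (c' - c).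
Proof. by apply/mnmP => -[[|[|[|i]]] lt_i3]; rewrite mnmBE !mnm3E. Qed.

Lemma mpolyX_mnm3 (R : nzRingType) a b c :
  'X_[mnm3 a b c] = 'X_0 ^+ a * 'X_1 ^+ b * 'X_2 ^+ c :> {mpoly R[3]}.
Proof.
rewrite mpolyXE_id !big_ord_recr big_ord0 /= mul1r !mnm3E /=.
by congr ('X_ _ ^+ _ * 'X_ _ ^+ _ * 'X_ _ ^+ _); apply: val_inj.
Qed.

Fixpoint markov_num (n : nat) : Pol :=
  match n with
  | 0 => 1
  | 1 => 'X_0 * 'X_2 + ('X_0 + 'X_1) ^+ 2
  | (k.+1 as k1).+1 => ('X_0 + 'X_1) * ('X_2 + 'X_0 + 'X_1) * markov_num k1
                       - 'X_0 * 'X_1 * 'X_2 ^+ 2 * markov_num k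
  end.

Lemma markov_numSS n : markov_num n.+2 =
  ('X_0 + 'X_1) * ('X_2 + 'X_0 + 'X_1) * markov_num n.+1 - 'X_0 * 'X_1 * 'X_2 ^+ 2 * markov_num n.
Proof. by []. Qed.

Lemma markov_num0 : markov_num 0 = 'X_[mnm3 0 0 0].
Proof. by rewrite mpolyX_mnm3 !expr0 !mulr1. Qed.

Lemma markov_num1 : markov_num 1 =
  'X_[mnm3 1 0 1] + 'X_[mnm3 2 0 0] + 'X_[mnm3 1 1 0] *+ 2 + 'X_[mnm3 0 2 0].
Proof. by rewrite !mpolyX_mnm3 /=; ring. Qed.

Lemma mcoeff_markov_numSS n a b c : (markov_num n.+2)@_(mnm3 a b c) =
    (if (2 <= a)%N then (markov_num n.+1)@_(mnm3 (a - 2) b c) else 0)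
  + (if (1 <= a)%N && (1 <= b)%N then (markov_num n.+1)@_(mnm3 (a - 1) (b - 1) c) else 0) *+ 2
  + (if (2 <= b)%N then (markov_num n.+1)@_(mnm3 a (b - 2) c) else 0)
  + (if (1 <= a)%N && (1 <= c)%N then (markov_num n.+1)@_(mnm3 (a - 1) b (c - 1)) else 0)
  + (if (1 <= b)%N && (1 <= c)%N then (markov_num n.+1)@_(mnm3 a (b - 1) (c - 1)) else 0)
  - (if [&& 1 <= a, 1 <= b & 2 <= c]%N
     then (markov_num n)@_(mnm3 (a - 1) (b - 1) (c - 2)) else 0).
Proof.
pose q1 := markov_num n.+1; pose q0 := markov_num n.
have -> : markov_num n.+2 = q1 * 'X_[mnm3 2 0 0] + (q1 * 'X_[mnm3 1 1 0]) *+ 2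
    + q1 * 'X_[mnm3 0 2 0] + q1 * 'X_[mnm3 1 0 1] + q1 * 'X_[mnm3 0 1 1]
    - q0 * 'X_[mnm3 1 1 2].
  by rewrite markov_numSS -/q1 -/q0 !mpolyX_mnm3; ring.
rewrite !mcoeffB !mcoeffD ?mcoeffMn !mcoeffMX_if !lem_mnm3 !subm_mnm3 !leq0n !subn0.
by rewrite ?andbT.
Qed.

Definition subtop_coef (n a b : nat) : nat :=
  (if a + b != n.+1 then 0 else
   if a == 0 then 1 else if a < n then 4 * a else if a == n then 3 * n - 1
   else if a == n.+1 then n else 0)%N.

Ltac case_ifs :=
  repeat match goal with
  | |- context [if ?c then _ else _] => case: (boolP c) => ?; try (exfalso; lia)
  end.

Lemma if_natr (c : bool) (k : nat) : (if c then k%:R else 0 :> rat) = (if c then k else 0)%:R.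
Proof. by case: c. Qed.

Ltac to_nat :=
  rewrite ?if_same ?if_natr ?mulr2n ?add0r ?addr0 -?natrD; apply/eqP; rewrite ?eqr_nat; apply/eqP.

Lemma mcoeff_markov_num_gt n a b c : (n < c)%N -> (markov_num n)@_(mnm3 a b c) = 0.
Proof.
elim/nat_ind2: n a b c => [||n IH0 IH1] a b c lt_nc.
- by rewrite markov_num0 mcoeffX eq_mnm3 [0%N == c]eq_sym eqn0Ngt lt_nc !andbF.
- rewrite markov_num1 !mulr2n !mcoeffD !mcoeffX !eq_mnm3 -[0 : rat]/(0%N%:R).
  to_nat; case_ifs; lia.
- by rewrite mcoeff_markov_numSS !IH1 ?IH0 ?if_same ?subrr ?addr0 //; lia.
Qed.

Lemma mcoeff_markov_num_top n a b :
  (markov_num n)@_(mnm3 a b n) = ((a == n) && (b == 0%N) : nat)%:R.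
Proof.
elim/nat_ind2: n a b => [||n IH0 IH1] a b.
- by rewrite markov_num0 mcoeffX eq_mnm3 eqxx andbT eq_sym [0%N == b]eq_sym.
- by rewrite markov_num1 !mulr2n !mcoeffD !mcoeffX !eq_mnm3; to_nat; case_ifs; lia.
- rewrite mcoeff_markov_numSS !(@mcoeff_markov_num_gt n.+1 _ _ n.+2) //.
  rewrite !subSS !subn0 !IH1 !IH0; apply/eqP; rewrite subr_eq; apply/eqP.
  by to_nat; case_ifs; lia.
Qed.

Lemma markov_num_neq0 n : markov_num n != 0.
Proof.
apply/eqP => Q0; have := mcoeff_markov_num_top n n 0.
by rewrite Q0 mcoeff0 !eqxx => /eqP; rewrite eq_sym oner_eq0.
Qed.

Lemma mcoeff_markov_num_subtop n a b : (0 < n)%N ->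
  (markov_num n)@_(mnm3 a b n.-1) = (subtop_coef n a b)%:R.
Proof.
elim/nat_ind2: n a b => [||n IH0 IH1] a b // _.
- by rewrite markov_num1 !mulr2n !mcoeffD !mcoeffX !eq_mnm3 /subtop_coef; to_nat; case_ifs; lia.
- rewrite -[n.+2.-1]/n.+1 mcoeff_markov_numSS !subSS !subn0 !subn1.
  rewrite !mcoeff_markov_num_top -[n]/n.+1.-1 !IH1 //=.
  rewrite [X in _ - X = _](_ : _ = if [&& 0 < a, 0 < b & 1 < n.+1]%N
                                  then (subtop_coef n a.-1 b.-1)%:R else 0); last first.
    by case: ifP => // /and3P[_ _ n_gt0]; rewrite IH0.
  apply/eqP; rewrite subr_eq; apply/eqP.
  by rewrite /subtop_coef; to_nat; case_ifs; lia.
Qed.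

Lemma sq_subst_mnm3 a b c :
  sq_subst 'X_[mnm3 a b c] = 'X_[mnm3 (a * 2) (b * 2) (c * 2)].
Proof.
rewrite /sq_subst comp_mpolyX mpolyX_mnm3 !big_ord_recr big_ord0 /= mul1r.
by rewrite !(tnth_nth 0) !mnm3E /= -!exprM !(mulnC 2).
Qed.

Lemma mcoeff_sq_subst (p : Pol) a b c :
  (sq_subst p)@_(mnm3 (a * 2) (b * 2) (c * 2)) = p@_(mnm3 a b c).
Proof.
rewrite /sq_subst comp_mpolyEX {3}[p]mpolyE !raddf_sum /=.
apply: eq_bigr => m _; rewrite !mcoeffZ; congr (_ * _).
have := sq_subst_mnm3 (m ord0) (m (inord 1)) (m (inord 2)).
rewrite /sq_subst -mnm3_eta => ->.
by rewrite !mcoeffX !eq_mnm3 !eqn_mul2r -eq_mnm3 -mnm3_eta.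
Qed.

Lemma sq_subst_inj : injective sq_subst.
Proof.
move=> p q eq_pq; apply/mpolyP => m.
by rewrite (mnm3_eta m) -(mcoeff_sq_subst p) -(mcoeff_sq_subst q) eq_pq.
Qed.

Definition sqK (p : Pol) : K := toK (sq_subst p).

Lemma sqK1 : sqK 1 = 1.
Proof. by rewrite /sqK /toK /sq_subst !rmorph1. Qed.

Lemma sqKD : {morph sqK : p q / p + q}.
Proof. by move=> p q; rewrite /sqK /toK /sq_subst !raddfD. Qed.

Lemma sqKB : {morph sqK : p q / p - q}.
Proof. by move=> p q; rewrite /sqK /toK /sq_subst !raddfB. Qed.

Lemma sqKM : {morph sqK : p q / p * q}.
Proof. by move=> p q; rewrite /sqK /toK /sq_subst !rmorphM. Qed.

Lemma sqKXn k : {morph sqK : p / p ^+ k}.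
Proof. by move=> p; rewrite /sqK /toK /sq_subst !rmorphXn. Qed.

Lemma sqK_inj : injective sqK.
Proof. by move=> p q /eqP; rewrite tofrac_eq => /eqP /sq_subst_inj. Qed.

Lemma sqK_eq0 p : (sqK p == 0) = (p == 0).
Proof. by rewrite /sqK /toK tofrac_eq0 -(inj_eq sq_subst_inj) /sq_subst comp_mpoly0. Qed.

Lemma sqK_X (i : 'I_3) : sqK 'X_i = var i ^+ 2.
Proof.
rewrite /sqK /sq_subst comp_mpolyXU /var /toK -tofracXn.
by case: i => -[|[|[|i]]] lt_i3 //; congr (tofrac ('X_ _ ^+ 2)); apply: val_inj.
Qed.

Lemma var_neq0 i : var i != 0.
Proof.
rewrite /var /toK tofrac_eq0; apply/eqP => /(congr1 (mcoeff U_(i))).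
by rewrite mcoeffXU mcoeff0 eqxx => /eqP; rewrite oner_eq0.
Qed.

Lemma markov_num_cassini n :
  markov_num n.+2 * markov_num n - markov_num n.+1 ^+ 2
  = ('X_0 + 'X_1) ^+ 2 * 'X_1 * 'X_2 * ('X_0 * 'X_1 * 'X_2 ^+ 2) ^+ n.
Proof.
elim: n => [|n IH]; first by rewrite /=; ring.
transitivity ('X_0 * 'X_1 * 'X_2 ^+ 2 *
  (markov_num n.+2 * markov_num n - markov_num n.+1 ^+ 2)); last by rewrite IH (exprS _ n); ring.
by rewrite markov_numSS [markov_num n.+2]markov_numSS; ring.
Qed.

Section ExchangeRelation.

Variables (F : fieldType) (x y z : F).
Hypotheses (nz_x : x != 0) (nz_y : y != 0) (nz_z : z != 0).

Lemma exchange_one_two :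
  (x ^+ 2 + ((x ^+ 2 + y ^+ 2) / z) ^+ 2) / y
  = (x ^+ 2 * z ^+ 2 + (x ^+ 2 + y ^+ 2) ^+ 2) * x / (x * y * z ^+ 2).
Proof. by field; rewrite nz_x nz_y nz_z. Qed.

(* [e] stands for (x y z^2)^n and [q0], [q1], [q2] for three consecutive numerators. *)
Lemma exchange_of_cassini (e q0 q1 q2 : F) : e != 0 -> q0 != 0 ->
  q2 * q0 - q1 ^+ 2 = (x ^+ 2 + y ^+ 2) ^+ 2 * y ^+ 2 * z ^+ 2 * e ^+ 2 ->
  (((x ^+ 2 + y ^+ 2) / z) ^+ 2 + (q1 * x / (e * (x * y * z ^+ 2))) ^+ 2) / (q0 * x / e)
  = q2 * x / (e * (x * y * z ^+ 2) * (x * y * z ^+ 2)).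
Proof.
move=> nz_e nz_q0 /eqP; rewrite subr_eq -(divfK nz_q0 (_ + _)) => /eqP /(mulIf nz_q0) ->.
by field; rewrite nz_x nz_y nz_z nz_e nz_q0.
Qed.

End ExchangeRelation.

Lemma farey_ok_n_Sn n : farey_ok n n.+1.
Proof. by rewrite /farey_ok coprimenS leqnSn orbT. Qed.

Lemma farey_adj_n_Sn n : farey_adj n n.+1 1 1.
Proof. by rewrite /farey_adj !muln1 !addn1 eqxx orbT. Qed.

Lemma markov_n_Sn (M : nat -> nat -> K) n : markov_spec M ->
  M n n.+1 = sqK (markov_num n) * Xv / (Xv * Yv * Zv ^+ 2) ^+ n.
Proof.
case=> M10 M01 M11 Mrec.
have [nzX nzY nzZ] : [/\ Xv != 0, Yv != 0 & Zv != 0] by split; apply: var_neq0.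
suff [] : M n n.+1 = sqK (markov_num n) * Xv / (Xv * Yv * Zv ^+ 2) ^+ n /\
          M n.+1 n.+2 = sqK (markov_num n.+1) * Xv / (Xv * Yv * Zv ^+ 2) ^+ n.+1 by [].
elim: n => [|n [IH0 IH1]].
  rewrite M01 sqK1 expr0 mul1r divr1; split=> //.
  rewrite (Mrec 1 0 0 1)%N // M01 M11 M10 /= !(sqKD, sqKXn, sqKM) !sqK_X.
  by rewrite -/Xv -/Yv -/Zv expr1 (exchange_one_two nzX nzY nzZ).
split=> //.
have q0_neq0 : sqK (markov_num n) != 0 by rewrite sqK_eq0 markov_num_neq0.
have D2n : ((Xv * Yv * Zv ^+ 2) ^+ n) ^+ 2 = (Xv ^+ 2 * Yv ^+ 2 * Zv ^+ 2 ^+ 2) ^+ n.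
  by rewrite exprAC; congr (_ ^+ n); rewrite exprMn exprMn.
have cassini : sqK (markov_num n.+2) * sqK (markov_num n) - sqK (markov_num n.+1) ^+ 2
    = (Xv ^+ 2 + Yv ^+ 2) ^+ 2 * Yv ^+ 2 * Zv ^+ 2 * ((Xv * Yv * Zv ^+ 2) ^+ n) ^+ 2.
  rewrite D2n -sqKXn -sqKM -sqKB markov_num_cassini.
  by rewrite !(sqKD, sqKXn, sqKM) !sqK_X.
have := Mrec n n.+1 1 1 (farey_ok_n_Sn n) isT (farey_adj_n_Sn n).
rewrite !muln1 !addn2 !addn1 => /(_ (leqnSn _)) ->.
rewrite IH0 IH1 M11 (exprSr _ n.+1) (exprSr _ n).
have nzD : (Xv * Yv * Zv ^+ 2) ^+ n != 0 :=
  expf_neq0 n (mulf_neq0 (mulf_neq0 nzX nzY) (expf_neq0 2 nzZ)).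
exact: (exchange_of_cassini nzX nzY nzZ nzD q0_neq0 cassini).
Qed.

Lemma markov_numerator_n_Sn (M : nat -> nat -> K) n P : markov_spec M -> (0 < n)%N ->
  is_numerator M n n.+1 P -> P = markov_num n.
Proof.
case: n => [|k] // HM _ [_ MP]; apply: sqK_inj.
have [nzX nzY nzZ] : [/\ Xv != 0, Yv != 0 & Zv != 0] by split; apply: var_neq0.
have := markov_n_Sn k.+1 HM; rewrite MP -/(sqK P).
have -> : (k.+1 - 1 = k)%N by lia.
have -> : (k.+2 - 1 = k.+1)%N by lia.
have -> : (k.+1 + k.+2 - 1 = 2 * k.+1)%N by lia.
set E := Xv ^+ k * Yv ^+ k.+1 * Zv ^+ (2 * k.+1).
have nzE : E != 0 :=
  mulf_neq0 (mulf_neq0 (expf_neq0 k nzX) (expf_neq0 _ nzY)) (expf_neq0 _ nzZ).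
have -> : (Xv * Yv * Zv ^+ 2) ^+ k.+1 = Xv * E.
  by rewrite /E exprMn exprMn exprM (exprS Xv k) !mulrA.
by rewrite (invfM Xv E) mulrA (mulfK nzX) => /(mulIf (invr_neq0 nzE)).
Qed.

Theorem theorem9p2 (M : nat -> nat -> K) (HM : markov_spec M)
  (n : nat) (Hn : (2 <= n)%N) (P : Pol) (HP : is_numerator M n n.+1 P)
  (m : nat) (Hm1 : (1 <= m)%N) (Hm2 : (m <= n - 1)%N) :
  P@_[multinom [tuple m; (n + 1 - m)%N; (n - 1)%N]] = (4 * m)%:R.
Proof.
have n_gt0 : (0 < n)%N by lia.
rewrite (markov_numerator_n_Sn HM n_gt0 HP) -/(mnm3 _ _ _) subn1.
rewrite mcoeff_markov_num_subtop // /subtop_coef.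
by congr _%:R; case_ifs; lia.
Qed.
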